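(* Let $H$ be a graph with tree-width $k-1$ and let $(\{X_i\mid i\in I\},T=(I,F))$ be a tree-decomposition of $H$ of width $k-1$. For an integer $r\ge0$ and $i\in I$ let $X_i^{(r)}=D_r(X_i,H):=\bigcup_{x\in X_i}D_r(x,H)$. Then for every integer $r\ge0$, $(\{X_i^{(r)}\mid i\in I\},T=(I,F))$ is a tree-decomposition of $H$ with $k$-breadth at most $r$.
   Context: Graphs are finite, connected, unweighted, undirected and simple; $d_H$ is the shortest-path distance and $D_r(x,H)=\{u: d_H(u,x)\le r\}$. A tree-decomposition of $H=(V,E)$ is a pair $(\{X_i\mid i\in I\},T=(I,F))$ with $T$ a tree and bags $X_i\subseteq V$ such that (1) $\bigcup_i X_i=V$; (2) every edge lies in some bag; (3) for each $v\in V$ the nodes containing $v$ induce a connected subtree of $T$. Its width is $\max_i|X_i|-1$, and the tree-width of $H$ is the minimum width over all its tree-decompositions. The $k$-breadth of a tree-decomposition is the minimum integer $r$ such that every bag is contained in a union of at most $k$ disks of $H$ of radius $r$. *)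

From mathcomp Require Import all_boot.
Set Implicit Arguments. Unset Strict Implicit. Unset Printing Implicit Defensive.

Definition simple_graph (V : finType) (e : rel V) : Prop :=
  symmetric e /\ irreflexive e.

Definition connected_graph (V : finType) (e : rel V) : Prop :=
  0 < #|V| /\ forall x y : V, connect e x y.

(* Shortest-path distance at most r: there is a walk x = v0, v1, ..., vn = u
   with n <= r (a walk of length n <= r exists iff d(x,u) <= r). *)
Definition dist_le (V : finType) (e : rel V) (r : nat) (x u : V) : bool :=
  [exists n : 'I_r.+1, [exists p : n.-tuple V, path e x p && (last x p == u)]].

Definition disk (V : finType) (e : rel V) (r : nat) (x : V) : {set V} :=
  [set u | dist_le e r x u].

Definition disk_set (V : finType) (e : rel V) (r : nat) (S : {set V}) : {set V} :=
  \bigcup_(x in S) disk e r x.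

Definition is_tree (I : finType) (F : rel I) : Prop :=
  simple_graph F /\ connected_graph F /\
  forall s : seq I, uniq s -> 3 <= size s -> ~~ cycle F s.

Definition is_tree_decomposition (V : finType) (e : rel V)
    (I : finType) (F : rel I) (X : I -> {set V}) : Prop :=
  is_tree F /\
  (forall v : V, exists i : I, v \in X i) /\
  (forall u v : V, e u v -> exists i : I, (u \in X i) && (v \in X i)) /\
  (forall v : V, forall i j : I, v \in X i -> v \in X j ->
     connect [rel a b | F a b && (v \in X a) && (v \in X b)] i j).

Definition width (V : finType) (I : finType) (X : I -> {set V}) : nat :=
  (\max_(i : I) #|X i|).-1.

Definition has_treewidth (V : finType) (e : rel V) (w : nat) : Prop :=
  (exists (I : finType) (F : rel I) (X : I -> {set V}),
      is_tree_decomposition e F X /\ width X = w) /\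
  (forall (I : finType) (F : rel I) (X : I -> {set V}),
      is_tree_decomposition e F X -> w <= width X).

Definition bags_covered (V : finType) (e : rel V) (I : finType)
    (X : I -> {set V}) (k r : nat) : Prop :=
  forall i : I, exists C : {set V},
    #|C| <= k /\ X i \subset \bigcup_(c in C) disk e r c.

(* The k-breadth (minimum such r) is at most r. *)
Definition kbreadth_le (V : finType) (e : rel V) (I : finType)
    (X : I -> {set V}) (k r : nat) : Prop :=
  exists r', r' <= r /\ bags_covered e X k r'.

From mathcomp Require Import all_boot.

Set Implicit Arguments.
Unset Strict Implicit.
Unset Printing Implicit Defensive.

(* Enlarging every bag by the same radius r keeps the bags containing a vertex
   v connected in T: if v lies within r of some x in X_a, walk from x to v; each
   edge of the walk lies in a bag, and the bags containing a walk vertex form a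
   subtree whose bags all contain v after enlargement, so these subtrees chain
   a to a bag containing v itself.  The breadth bound is immediate, since
   D_r(X_i) is by definition covered by the |X_i| <= k disks centred in X_i. *)

Lemma dist_leP (V : finType) (e : rel V) r x u :
  reflect (exists2 p : seq V, size p <= r & path e x p && (last x p == u))
          (dist_le e r x u).
Proof.
apply: (iffP existsP) => [[n /existsP [p Hp]] | [p size_p Hp]].
  by exists p => //; rewrite size_tuple -ltnS.
by exists (Ordinal (size_p : size p < r.+1)); apply/existsP; exists (in_tuple p).
Qed.

Lemma dist_le_walk (V : finType) (e : rel V) r x p :
  size p <= r -> path e x p -> dist_le e r x (last x p).
Proof. by move=> size_p xp; apply/dist_leP; exists p; rewrite ?xp ?eqxx. Qed.

Lemma mem_disk_set (V : finType) (e : rel V) r (S : {set V}) x u :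
  x \in S -> dist_le e r x u -> u \in disk_set e r S.
Proof. by move=> Sx xu; apply/bigcupP; exists x; rewrite ?inE. Qed.

Lemma disk_setP (V : finType) (e : rel V) r (S : {set V}) u :
  reflect (exists2 x, x \in S & dist_le e r x u) (u \in disk_set e r S).
Proof.
apply: (iffP bigcupP) => [[x Sx] | [x Sx xu]]; first by rewrite inE; exists x.
by exists x; rewrite ?inE.
Qed.

Lemma sub_disk_set (V : finType) (e : rel V) r (S : {set V}) :
  S \subset disk_set e r S.
Proof.
by apply/subsetP => x Sx; apply: mem_disk_set Sx (dist_le_walk (p := [::]) _ _).
Qed.

Lemma card_bag_le_width (V I : finType) (X : I -> {set V}) i :
  #|X i| <= (width X).+1.
Proof. exact: leq_trans (leq_bigmax (F := fun i => #|X i|) i) (leqSpred _). Qed.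

Section EnlargedBags.
Variables (V : finType) (e : rel V) (I : finType) (F : rel I).

Definition bag_rel (Y : I -> {set V}) (v : V) : rel I :=
  [rel a b | F a b && (v \in Y a) && (v \in Y b)].

Lemma bag_rel_sym Y v : symmetric F -> symmetric (bag_rel Y v).
Proof. by move=> symF a b; rewrite /bag_rel /= symF andbAC. Qed.

Lemma connect_bag_rel_mono (Y Z : I -> {set V}) w v a b :
  (forall c, w \in Y c -> v \in Z c) ->
  connect (bag_rel Y w) a b -> connect (bag_rel Z v) a b.
Proof.
move=> YZ; apply: connect_sub => c d /andP [/andP [Fcd Yc] Yd].
by apply: connect1; rewrite /bag_rel /= Fcd !YZ.
Qed.

Variables (X : I -> {set V}) (r : nat).
Hypothesis edge_in_bag :
  forall u w : V, e u w -> exists i : I, (u \in X i) && (w \in X i).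
Hypothesis bag_connected :
  forall (w : V) (i j : I), w \in X i -> w \in X j -> connect (bag_rel X w) i j.

Let Xr i := disk_set e r (X i).

Lemma connect_along_walk p x a c : size p <= r -> path e x p ->
  x \in X a -> last x p \in X c -> connect (bag_rel Xr (last x p)) a c.
Proof.
elim: p x a => [|y p IHp] x a size_p xp Xx Xlast.
  apply: connect_bag_rel_mono (bag_connected Xx Xlast) => b Xxb.
  exact: mem_disk_set Xxb (dist_le_walk (p := [::]) _ _).
case/andP: xp => xy yp; have [b /andP [Xxb Xyb]] := edge_in_bag xy.
apply: connect_trans (IHp _ _ (ltnW size_p) yp Xyb Xlast).
apply: connect_bag_rel_mono (bag_connected Xx Xxb) => d Xxd.
by apply: mem_disk_set Xxd (dist_le_walk size_p _); rewrite /= xy.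
Qed.

Lemma enlarged_bag_connected v i j : symmetric F -> (exists c, v \in X c) ->
  v \in Xr i -> v \in Xr j -> connect (bag_rel Xr v) i j.
Proof.
move=> symF [c Xv] /disk_setP [x Xx /dist_leP [p size_p /andP [xp /eqP xv]]].
case/disk_setP=> y Xy /dist_leP [q size_q /andP [yq /eqP yv]].
have ic : connect (bag_rel Xr v) i c.
  by rewrite -xv in Xv *; apply: connect_along_walk.
have jc : connect (bag_rel Xr v) j c.
  by rewrite -yv in Xv *; apply: connect_along_walk.
by rewrite (connect_trans ic) // (sym_connect_sym (bag_rel_sym _ _ symF)).
Qed.

End EnlargedBags.

Lemma enlarged_tree_decomposition (V : finType) (e : rel V)
    (I : finType) (F : rel I) (X : I -> {set V}) r :
  is_tree_decomposition e F X ->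
  is_tree_decomposition e F (fun i => disk_set e r (X i)).
Proof.
move=> [treeF [cover [edge_in_bag bag_connected]]].
have XXr i := subsetP (sub_disk_set e r (X i)).
split=> //; split=> [v | ]; first by have [i /XXr] := cover v; exists i.
split=> [u w /edge_in_bag [i /andP [Xu Xw]] | v i j]; first by exists i; rewrite !XXr.
case: treeF => [[symF _] _].
exact: (enlarged_bag_connected edge_in_bag bag_connected symF (cover v)).
Qed.

Lemma enlarged_bags_covered (V : finType) (e : rel V)
    (I : finType) (X : I -> {set V}) k r :
  (forall i, #|X i| <= k) -> bags_covered e (fun i => disk_set e r (X i)) k r.
Proof. by move=> card_X i; exists (X i). Qed.

Theorem lemma14 (V : finType) (e : rel V) (k : nat)
    (I : finType) (F : rel I) (X : I -> {set V}) :
  simple_graph e -> connected_graph e -> 0 < k ->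
  has_treewidth e k.-1 ->
  is_tree_decomposition e F X -> width X = k.-1 ->
  forall r : nat,
    is_tree_decomposition e F (fun i => disk_set e r (X i)) /\
    kbreadth_le e (fun i => disk_set e r (X i)) k r.
Proof.
move=> _ _ k_gt0 _ decX widthX r.
split; first exact: enlarged_tree_decomposition.
exists r; split=> //; apply: enlarged_bags_covered => i.
by rewrite -(prednK k_gt0) -widthX card_bag_le_width.
Qed.
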